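(* Let $n\ge4$, $k=3$, $d$ an integer, and let $A_c=(\alpha_c,n_1,d_1,k_1,n_2,d_2,k_2)$ be an allowable critical data set for type $(n,d,3)$ with $k_1=2$, $k_2=1$. Then $C_{21}>0$, except in the following four cases, where $C_{21}=0$: (a) $(n_1,n_2,d_1,d_2)=(4,3,7,6)$, $\alpha_c=\frac32$; (b) $(n_1,n_2,d_1,d_2)=(3,3,5,6)$, $\alpha_c=1$; (c) $(n_1,n_2,d_1,d_2)=(2,3,3,6)$, $\alpha_c=\frac34$; (d) $(n_1,n_2,d_1,d_2)=(1,3,1,6)$, $\alpha_c=\frac35$.
   Context: Let $0<k<n$ and $d$ be integers. Write $d=na-t$ with integers $a,t$, $0\le t<n$, and $ka=l(n-k)+t+m$ with integers $l,m$, $0\le m<n-k$. A critical data set for type $(n,d,k)$ is a tuple $A_c=(\alpha_c,n_1,d_1,k_1,n_2,d_2,k_2)$ with integers $n_i\ge1$, $k_i\ge0$, $d_i$ such that $n_1+n_2=n$, $d_1+d_2=d$, $k_1+k_2=k$, $\frac{d_2}{n_2}>\frac{d_1}{n_1}$, $\frac{k_1}{n_1}>\frac{k_2}{n_2}$, and $\alpha_c=\frac{d_2n_1-d_1n_2}{n_2k_1-n_1k_2}$. It is allowable if moreover $\frac tk<\alpha_c<\frac{ln+t}{k}$, $d\ge\frac1k(n^2-1)-(n-k)$, $d_1\ge\frac1{k_1}(n_1^2-1)-(n_1-k_1)$, and either ($k_2=0$ and $n_2=1$) or ($k_2\ge1$ and $d_2\ge\frac1{k_2}(n_2^2-1)-(n_2-k_2)$).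 Define $C_{21}=-n_1n_2+d_2n_1-d_1n_2+k_2(d_1+n_1-k_1)$. *)

From Stdlib Require Import ZArith QArith.
Open Scope Z_scope.

(* d = n*a - t with 0 <= t < n  (requires n > 0): a = ceil(d/n). *)
Definition a_of (n d : Z) : Z := - ((- d) / n).
Definition t_of (n d : Z) : Z := n * a_of n d - d.
(* k*a = l*(n-k) + t + m with 0 <= m < n-k  (requires n-k > 0). *)
Definition l_of (n d k : Z) : Z := (k * a_of n d - t_of n d) / (n - k).
Definition m_of (n d k : Z) : Z := (k * a_of n d - t_of n d) mod (n - k).

Definition inject (z : Z) : Q := inject_Z z.

Definition critical_data_set (n d k : Z) (alpha : Q) (n1 d1 k1 n2 d2 k2 : Z) : Prop :=
  1 <= n1 /\ 1 <= n2 /\ 0 <= k1 /\ 0 <= k2 /\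
  n1 + n2 = n /\ d1 + d2 = d /\ k1 + k2 = k /\
  (inject d2 / inject n2 > inject d1 / inject n1)%Q /\
  (inject k1 / inject n1 > inject k2 / inject n2)%Q /\
  alpha == (inject (d2 * n1 - d1 * n2) / inject (n2 * k1 - n1 * k2))%Q.

Definition d_bound (n d k : Z) : Prop :=
  (inject d >= inject (n * n - 1) / inject k - inject (n - k))%Q.

Definition allowable (n d k : Z) (alpha : Q) (n1 d1 k1 n2 d2 k2 : Z) : Prop :=
  critical_data_set n d k alpha n1 d1 k1 n2 d2 k2 /\
  (inject (t_of n d) / inject k < alpha)%Q /\
  (alpha < inject (l_of n d k * n + t_of n d) / inject k)%Q /\
  d_bound n d k /\
  d_bound n1 d1 k1 /\
  ((k2 = 0 /\ n2 = 1) \/ (1 <= k2 /\ d_bound n2 d2 k2)).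

Definition C21 (n1 d1 k1 n2 d2 k2 : Z) : Z :=
  - n1 * n2 + d2 * n1 - d1 * n2 + k2 * (d1 + n1 - k1).

(* Write D := d2 n1 - d1 n2 and let q := n2 a - d2, so that D = n2 t - n q.
   The lower bound t/3 < alpha = D/(2 n2 - n1) says n (t - 3 q) > 0, and together
   with n1 < 2 n2 this forces D >= n2.  On the other hand
   n2 C21 = D (n2 - 1) + n1 (d2 - n2^2 + n2) - 2 n2, where the second summand is
   nonnegative by the bound on d2.  Hence C21 <= 0 only if n2 <= 3, so n1 <= 5,
   and the remaining finitely many shapes are settled by linear arithmetic. *)

From Stdlib Require Import ZArith QArith Lia.
Open Scope Z_scope.

Lemma inject_div_Qmake (a b : Z) : 0 < b -> (inject a / inject b == a # Z.to_pos b)%Q.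
Proof.
  intros Hb; destruct b as [|p|p]; try lia.
  unfold inject, inject_Z, Qdiv, Qmult, Qinv, Qeq; simpl; lia.
Qed.

Lemma inject_div_lt (a b c e : Z) : 0 < b -> 0 < e ->
  (inject a / inject b < inject c / inject e)%Q -> a * e < c * b.
Proof.
  intros Hb He H; rewrite (inject_div_Qmake a b Hb), (inject_div_Qmake c e He) in H.
  unfold Qlt in H; simpl in H; rewrite !Z2Pos.id in H by lia; lia.
Qed.

Lemma d_bound_Z (n d k : Z) : 0 < k -> d_bound n d k -> n * n - 1 - k * (n - k) <= k * d.
Proof.
  intros Hk H; unfold d_bound in H; rewrite (inject_div_Qmake _ _ Hk) in H.
  destruct k as [|p|p]; try lia.
  unfold inject, inject_Z, Qle, Qminus, Qplus, Qopp in H; simpl in H; lia.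
Qed.

Lemma t_of_bounds (n d : Z) : 0 < n -> 0 <= t_of n d < n.
Proof.
  intros Hn; unfold t_of, a_of.
  pose proof (Z.div_mod (- d) n ltac:(lia)).
  pose proof (Z.mod_pos_bound (- d) n Hn); lia.
Qed.

Lemma slope_gap_ge (n1 n2 k1 k2 d1 d2 a t : Z) :
  0 <= n1 -> 1 <= n2 -> 1 <= k2 -> k2 * n1 < k1 * n2 ->
  t = (n1 + n2) * a - (d1 + d2) -> 0 <= t ->
  t * (k1 * n2 - k2 * n1) < (k1 + k2) * (d2 * n1 - d1 * n2) ->
  n2 <= k2 * (d2 * n1 - d1 * n2).
Proof.
  intros Hn1 Hn2 Hk2 Hslope Ht Ht0 Halpha.
  set (q := n2 * a - d2); set (D := d2 * n1 - d1 * n2) in *.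
  assert (HD : D = n2 * t - (n1 + n2) * q) by (subst D q; rewrite Ht; ring).
  assert (Hq : (k1 + k2) * q < k2 * t).
  { assert (Hid : (k1 + k2) * D - t * (k1 * n2 - k2 * n1)
                  = (n1 + n2) * (k2 * t - (k1 + k2) * q)) by (rewrite HD; ring).
    assert (Hpos : 0 < (n1 + n2) * (k2 * t - (k1 + k2) * q)) by lia.
    apply Z.mul_pos_cancel_l in Hpos; lia. }
  destruct (Z_lt_le_dec q 0) as [Hneg | Hnonneg].
  - assert (n1 + n2 <= - (n1 + n2) * q) by nia.
    nia.
  - assert (k2 * (n1 + n2) * q <= (k1 + k2) * n2 * q) by nia.
    assert ((k1 + k2) * n2 * q <= n2 * (k2 * t - 1)) by nia.
    nia.
Qed.

Lemma C21_mul_n2 (n1 d1 k1 n2 d2 k2 : Z) :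
  n2 * C21 n1 d1 k1 n2 d2 k2
  = (d2 * n1 - d1 * n2) * (n2 - k2) + n1 * (k2 * d2 - n2 * n2 + k2 * n2) - k1 * k2 * n2.
Proof. unfold C21; ring. Qed.

Lemma C21_nonpos_exceptions (n1 n2 d1 d2 a t : Z) :
  4 <= n1 + n2 -> 1 <= n1 -> 1 <= n2 -> n1 < 2 * n2 ->
  t = (n1 + n2) * a - (d1 + d2) -> 0 <= t < n1 + n2 ->
  t * (2 * n2 - n1) < 3 * (d2 * n1 - d1 * n2) ->
  (n1 + n2) * (n1 + n2) - 1 - 3 * (n1 + n2 - 3) <= 3 * (d1 + d2) ->
  n1 * n1 - 1 - 2 * (n1 - 2) <= 2 * d1 ->
  n2 * n2 - 1 - (n2 - 1) <= d2 ->
  C21 n1 d1 2 n2 d2 1 <= 0 ->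
  (n1, n2, d1, d2) = (4, 3, 7, 6) \/ (n1, n2, d1, d2) = (3, 3, 5, 6) \/
  (n1, n2, d1, d2) = (2, 3, 3, 6) \/ (n1, n2, d1, d2) = (1, 3, 1, 6).
Proof.
  intros Hn Hn1 Hn2 Hslope Ht Ht0 Halpha Hd Hd1 Hd2 HC.
  assert (Hgap : n2 <= d2 * n1 - d1 * n2).
  { pose proof (slope_gap_ge n1 n2 2 1 d1 d2 a t); lia. }
  assert (Hprod : (d2 * n1 - d1 * n2) * (n2 - 1) <= 2 * n2).
  { pose proof (C21_mul_n2 n1 d1 2 n2 d2 1).
    assert (0 <= n1 * (d2 - n2 * n2 + n2)) by nia.
    nia. }
  assert (Hn2_le : n2 <= 3) by nia.
  assert (n2 = 2 \/ n2 = 3) as [-> | ->] by lia;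
    assert (n1 = 1 \/ n1 = 2 \/ n1 = 3 \/ n1 = 4 \/ n1 = 5)
      as [-> | [-> | [-> | [-> | ->]]]] by lia;
    unfold C21 in HC;
    first [ exfalso; lia
          | assert (d1 = 7 /\ d2 = 6) as [-> ->] by lia; left; reflexivity
          | assert (d1 = 5 /\ d2 = 6) as [-> ->] by lia; right; left; reflexivity
          | assert (d1 = 3 /\ d2 = 6) as [-> ->] by lia; right; right; left; reflexivity
          | assert (d1 = 1 /\ d2 = 6) as [-> ->] by lia; right; right; right; reflexivity ].
Qed.

Theorem proposition7p3 (n d : Z) (alpha : Q) (n1 d1 n2 d2 : Z) :
  4 <= n ->
  allowable n d 3 alpha n1 d1 2 n2 d2 1 ->
  (((n1, n2, d1, d2) = (4, 3, 7, 6) /\ (alpha == 3 # 2)%Q) \/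
   ((n1, n2, d1, d2) = (3, 3, 5, 6) /\ (alpha == 1)%Q) \/
   ((n1, n2, d1, d2) = (2, 3, 3, 6) /\ (alpha == 3 # 4)%Q) \/
   ((n1, n2, d1, d2) = (1, 3, 1, 6) /\ (alpha == 3 # 5)%Q) ->
     C21 n1 d1 2 n2 d2 1 = 0) /\
  (~ (((n1, n2, d1, d2) = (4, 3, 7, 6) /\ (alpha == 3 # 2)%Q) \/
      ((n1, n2, d1, d2) = (3, 3, 5, 6) /\ (alpha == 1)%Q) \/
      ((n1, n2, d1, d2) = (2, 3, 3, 6) /\ (alpha == 3 # 4)%Q) \/
      ((n1, n2, d1, d2) = (1, 3, 1, 6) /\ (alpha == 3 # 5)%Q)) ->
     0 < C21 n1 d1 2 n2 d2 1).
Proof.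
  intros Hn Hall; split.
  { intros [[E _] | [[E _] | [[E _] | [E _]]]]; injection E; intros; subst; reflexivity. }
  intros Hnot.
  destruct Hall as [[Hn1 [Hn2 [_ [_ [En [Ed [_ [_ [Hslope_k Halpha]]]]]]]]]
                    [Hlow [_ [Hd [Hd1 [[Hk2 _] | [_ Hd2]]]]]]]; [lia |].
  apply d_bound_Z in Hd, Hd1, Hd2; try lia.
  apply inject_div_lt in Hslope_k; try lia.
  rewrite Halpha in Hlow; apply inject_div_lt in Hlow; try lia.
  pose proof (t_of_bounds n d ltac:(lia)) as Ht0.
  destruct (Z_lt_le_dec 0 (C21 n1 d1 2 n2 d2 1)) as [Hpos | Hnonpos]; [exact Hpos | exfalso].
  subst n d.
  pose proof (C21_nonpos_exceptions n1 n2 d1 d2 (a_of (n1 + n2) (d1 + d2))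
    (t_of (n1 + n2) (d1 + d2)) ltac:(lia) Hn1 Hn2 ltac:(lia) eq_refl Ht0
    ltac:(lia) Hd Hd1 ltac:(lia) Hnonpos) as Hcases.
  apply Hnot; rewrite Halpha.
  destruct Hcases as [E | [E | [E | E]]]; injection E as -> -> -> ->;
    [left | right; left | right; right; left | right; right; right]; split; reflexivity.
Qed.
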